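(* For every generator $(v_0,v_1,v_2,v_3)$ of $C_3^{h\neq}(V)$ one has $$\nu\big(\widehat\sigma(v_0,v_1,v_2,v_3)\big)=\mu\big(\partial(v_0,v_1,v_2,v_3)\big)\quad\text{in } \mathbb C\wedge_{\mathbb Z}\mathbb C,$$ where $\mu$ is extended linearly. Consequently, $\widehat\sigma$ maps the $3$-cycles of $C_*^{h\neq}(V)_G$ into $\ker\nu$. Given that $\widehat\sigma$ kills boundaries in $\widehat{\mathcal P}(\mathbb C)$, it therefore induces a homomorphism $H_3^{h\neq}(V)\to\widehat{\mathcal B}(\mathbb C)$.
   Context: Let $V=(\mathbb C^2\setminus\{0\})/\pm$, let $G=\mathrm{PSL}(2,\mathbb C)$ act on $V$ on the left by matrix multiplication, and let $h:V\to\mathbb CP^1$ be $h(\pm(\alpha,\beta)^T)=\alpha/\beta$. For $n\ge 0$ let $C_n(V)$ be the free abelian group on $(n+1)$-tuples of elements of $V$, with boundary $\partial(v_0,\dots,v_n)=\sum_{i=0}^n(-1)^i(v_0,\dots,\widehat{v_i},\dots,v_n)$ and the diagonal left $G$-action. Let $C_n^{h\neq}(V)$ be the subcomplex spanned by tuples whose $h(v_i)$ are pairwise distinct. Let $C_n^{h\neq}(V)_G=\mathbb Z\otimes_{\mathbb Z[G]}C_n^{h\neq}(V)$, and let $H_n^{h\neq}(V)$ denote its homology. For $v_i,v_j\in V$ with $h(v_i)\ne h(v_j)$, $\det(v_i,v_j)$ denotes the determinant of the $2\times2$ matrix whose columns are representatives of $v_i,v_j$. It is nonzero and defined up to sign;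 fix the sign by requiring $0\le\arg\det(v_i,v_j)<\pi$. Put $c_{ij}=\mathrm{Log}\det(v_i,v_j)$ (principal branch). This is invariant under $G$. Define $\widehat\sigma(v_0,v_1,v_2,v_3)=(w_0,w_1,w_2)$, where - $w_0=c_{03}+c_{12}-c_{02}-c_{13}$, - $w_1=c_{02}+c_{13}-c_{01}-c_{23}$, - $w_2=c_{01}+c_{23}-c_{03}-c_{12}$. This triple is a combinatorial flattening of the cross ratio $z=[h(v_0):h(v_1):h(v_2):h(v_3)]$, where $[a:b:c:d]=\frac{(a-d)(b-c)}{(b-d)(a-c)}$. It defines a map $C_3^{h\neq}(V)_G\to\widehat{\mathcal P}(\mathbb C)$. Here $\widehat{\mathcal P}(\mathbb C)$ is Neumann's extended pre-Bloch group. It is the free abelian group on combinatorial flattenings $[z;p,q]=(w_0,w_1,w_2)$, where $z\in\mathbb C\setminus\{0,1\}$, $p,q\in\mathbb Z$, $w_0=\mathrm{Log}z+p\pi i$, $w_1=-\mathrm{Log}(1-z)+q\pi i$, and $w_0+w_1+w_2=0$, taken modulo Neumann's lifted five-term relations. The map $\nu:\widehat{\mathcal P}(\mathbb C)\to\mathbb C\wedge_{\mathbb Z}\mathbb C$ is $\nu(w_0,w_1,w_2)=w_0\wedge w_1$, and $\widehat{\mathcal B}(\mathbb C)=\ker\nu$. Define $\mu:C_2^{h\neq}(V)_G\to\mathbb C\wedge_{\mathbb Z}\mathbb C$ by $\mu(v_0,v_1,v_2)=c_{01}\wedge c_{02}-c_{01}\wedge c_{12}+c_{02}\wedge c_{12}$.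 *)

From Stdlib Require Import Reals.
From HB Require Import structures.
From mathcomp Require Import all_boot all_algebra.
Set Implicit Arguments. Unset Strict Implicit. Unset Printing Implicit Defensive.

Record cpx := mkC { cRe : R; cIm : R }.

Definition cadd (z w : cpx) : cpx := mkC (Rplus (cRe z) (cRe w)) (Rplus (cIm z) (cIm w)).
Definition copp (z : cpx) : cpx := mkC (Ropp (cRe z)) (Ropp (cIm z)).
Definition csub (z w : cpx) : cpx := cadd z (copp w).
Definition cmul (z w : cpx) : cpx :=
  mkC (Rminus (Rmult (cRe z) (cRe w)) (Rmult (cIm z) (cIm w)))
      (Rplus (Rmult (cRe z) (cIm w)) (Rmult (cIm z) (cRe w))).
Definition czero : cpx := mkC R0 R0.
Definition cone : cpx := mkC R1 R0.

(* principal argument, with values in (-PI, PI] *)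
Definition Arg (z : cpx) : R :=
  let x := cRe z in let y := cIm z in
  if Rlt_dec R0 x then atan (Rdiv y x)
  else if Rlt_dec x R0 then
    (if Rle_dec R0 y then Rplus (atan (Rdiv y x)) PI
     else Rminus (atan (Rdiv y x)) PI)
  else if Rlt_dec R0 y then Rdiv PI (Rplus R1 R1)
  else if Rlt_dec y R0 then Ropp (Rdiv PI (Rplus R1 R1))
  else R0.

Definition cLog (z : cpx) : cpx :=
  mkC (ln (sqrt (Rplus (Rsqr (cRe z)) (Rsqr (cIm z))))) (Arg z).

(* ---------- V = (C^2 \ 0)/± , represented by representatives ---------- *)
Definition CV := (cpx * cpx)%type.

Definition vnonzero (v : CV) : Prop := v <> (czero, czero).

(* h(v) <> h(w) in CP^1, for nonzero v, w : alpha_v/beta_v <> alpha_w/beta_w *)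
Definition hdistinct (v w : CV) : Prop := cmul v.1 w.2 <> cmul w.1 v.2.

Definition det (v w : CV) : cpx := csub (cmul v.1 w.2) (cmul w.1 v.2).

(* sign normalisation: the one of +-z with 0 <= arg < PI *)
Definition normsign (z : cpx) : cpx :=
  if Rle_dec R0 (Arg z) then (if Rlt_dec (Arg z) PI then z else copp z)
  else copp z.

Definition cc (v w : CV) : cpx := cLog (normsign (det v w)).

Definition gen4 (v0 v1 v2 v3 : CV) : Prop :=
  [/\ vnonzero v0, vnonzero v1, vnonzero v2 & vnonzero v3] /\
  [/\ hdistinct v0 v1, hdistinct v0 v2, hdistinct v0 v3 & hdistinct v1 v2] /\
  (hdistinct v1 v3 /\ hdistinct v2 v3).

(* formal Z-combinations of wedges a /\ b *)
Definition wform := seq (int * (cpx * cpx)).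

Definition alt_biadd (B : zmodType) (f : cpx -> cpx -> B) : Prop :=
  [/\ (forall x y z, f (cadd x y) z = (f x z + f y z)%R),
      (forall x y z, f x (cadd y z) = (f x y + f x z)%R)
    & (forall x, f x x = 0%R)].

Definition wedge_eval (B : zmodType) (f : cpx -> cpx -> B) (s : wform) : B :=
  (\sum_(p <- s) f p.2.1 p.2.2 *~ p.1)%R.

(* equality in the exterior square C /\_Z C, via its universal property:
   two formal combinations are equal iff every alternating Z-bilinear map
   into an abelian group takes the same value on them. *)
Definition weq (s t : wform) : Prop :=
  forall (B : zmodType) (f : cpx -> cpx -> B),
    alt_biadd f -> wedge_eval f s = wedge_eval f t.

Definition wscale (k : int) (s : wform) : wform :=
  map (fun p => ((k * p.1)%R, p.2)) s.

Definition sigma_hat (v0 v1 v2 v3 : CV) : cpx * cpx * cpx :=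
  let c01 := cc v0 v1 in let c02 := cc v0 v2 in let c03 := cc v0 v3 in
  let c12 := cc v1 v2 in let c13 := cc v1 v3 in let c23 := cc v2 v3 in
  (csub (cadd c03 c12) (cadd c02 c13),
   csub (cadd c02 c13) (cadd c01 c23),
   csub (cadd c01 c23) (cadd c03 c12)).

Definition nu (w : cpx * cpx * cpx) : wform := [:: (1%R, (w.1.1, w.1.2))].

Definition mu (v0 v1 v2 : CV) : wform :=
  [:: (1%R, (cc v0 v1, cc v0 v2));
      ((-1)%R, (cc v0 v1, cc v1 v2));
      (1%R, (cc v0 v2, cc v1 v2))].

Definition mu_bd (v0 v1 v2 v3 : CV) : wform :=
  wscale 1 (mu v1 v2 v3) ++ wscale (-1) (mu v0 v2 v3)
  ++ wscale 1 (mu v0 v1 v3) ++ wscale (-1) (mu v0 v1 v2).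

Definition tuple3 := (CV * CV * CV)%type.
Definition tuple4 := (CV * CV * CV * CV)%type.

Definition gen4t (t : tuple4) : Prop :=
  let '(v0, v1, v2, v3) := t in gen4 v0 v1 v2 v3.

(* 3-chain: finite Z-combination of generators *)
Definition chain3 := seq (int * tuple4).

Definition faces (t : tuple4) : seq (int * tuple3) :=
  let '(v0, v1, v2, v3) := t in
  [:: (1%R, (v1, v2, v3)); ((-1)%R, (v0, v2, v3));
      (1%R, (v0, v1, v3)); ((-1)%R, (v0, v1, v2))].

Definition bd (ch : chain3) : seq (int * tuple3) :=
  flatten (map (fun p => map (fun q => ((p.1 * q.1)%R, q.2)) (faces p.2)) ch).

Definition mact (a b c d : cpx) (v : CV) : CV :=
  (cadd (cmul a v.1) (cmul b v.2), cadd (cmul c v.1) (cmul d v.2)).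

Definition Veq (v w : CV) : Prop := v = w \/ v = (copp w.1, copp w.2).

(* t and t' lie in the same orbit of G = PSL(2,C) acting diagonally on V^3 *)
Definition Gequiv (t t' : tuple3) : Prop :=
  let '(v0, v1, v2) := t in let '(w0, w1, w2) := t' in
  exists a b c d : cpx, csub (cmul a d) (cmul b c) = cone /\
    [/\ Veq (mact a b c d v0) w0, Veq (mact a b c d v1) w1
      & Veq (mact a b c d v2) w2].

(* a 2-chain is zero in the coinvariants Z (x)_{Z[G]} C_2^{h<>}(V), i.e. it is
   killed by every G-invariant Z-valued (or abelian-group-valued) function *)
Definition zero_coinv (s : seq (int * tuple3)) : Prop :=
  forall (B : zmodType) (phi : tuple3 -> B),
    (forall t t', Gequiv t t' -> phi t = phi t') ->
    (\sum_(p <- s) phi p.2 *~ p.1)%R = 0%R.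

Definition nu_sigma_chain (ch : chain3) : wform :=
  flatten (map (fun p => let '(v0, v1, v2, v3) := p.2 in
                         wscale p.1 (nu (sigma_hat v0 v1 v2 v3))) ch).

(** Expanding [w0 /\ w1] by biadditivity and antisymmetry, with [w0] and [w1]
    written in the six logarithms [c_ij], produces exactly the twelve terms of
    [mu] on the four faces of the simplex; this identity is formal in the
    [c_ij].  For the consequence on cycles, [mu] is [G]-invariant: an element
    of [SL(2,C)] preserves determinants, and the sign normalisation makes
    [c_ij] independent of the representatives of [v_i, v_j] up to [±].  Hence
    [mu] factors through the coinvariants, and [nu o sigma_hat = mu o bd]
    vanishes on every chain whose boundary is zero there. *)

From Stdlib Require Import Reals Lra.
From mathcomp Require Import all_boot all_algebra.
Import GRing.Theory.

Set Implicit Arguments.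
Unset Strict Implicit.
Unset Printing Implicit Defensive.

Local Open Scope R_scope.

Lemma atan_div_pos x y : 0 < x * y -> 0 < atan (y / x).
Proof.
move=> Hxy; rewrite -atan_0; apply: atan_increasing.
have Hx : x <> 0 by move=> Hx; rewrite Hx Rmult_0_l in Hxy; lra.
have -> : y / x = (x * y) / (x * x) by field.
by apply: Rdiv_lt_0_compat; nra.
Qed.

Lemma atan_div_neg x y : x * y < 0 -> atan (y / x) < 0.
Proof.
move=> Hxy; have Hx : x <> 0 by move=> Hx; rewrite Hx Rmult_0_l in Hxy; lra.
have -> : y / x = - (- y / x) by field.
rewrite atan_opp; suff : 0 < atan (- y / x) by lra.
apply: atan_div_pos; lra.
Qed.

Lemma atan_0_div x : atan (0 / x) = 0.
Proof. by rewrite /Rdiv Rmult_0_l atan_0. Qed.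

Definition upper_half (z : cpx) : Prop := 0 < cIm z \/ (cIm z = 0 /\ 0 < cRe z).

Lemma Arg_range_upper_half z : ~ (cRe z = 0 /\ cIm z = 0) ->
  (0 <= Arg z < PI <-> upper_half z).
Proof.
case: z => x y /= Hz; rewrite /Arg /upper_half /=.
have Hpi := PI_RGT_0; have [Hlo Hhi] := atan_bound (y / x).
case: (Rlt_dec R0 x) => Hx /=; [|case: (Rlt_dec x R0) => Hx' /=].
- case: (Rtotal_order y 0) => [Hy|[->|Hy]].
  + have : atan (y / x) < 0 by apply: atan_div_neg; nra.
    by split => ?; lra.
  + by rewrite atan_0_div; split => ?; lra.
  + have : 0 < atan (y / x) by apply: atan_div_pos; nra.
    by split => ?; lra.
- case: (Rle_dec R0 y) => Hy /=; last by split => ?; lra.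
  case: Hy => [Hy|<-]; last by rewrite atan_0_div; split => ?; lra.
  have : atan (y / x) < 0 by apply: atan_div_neg; nra.
  by split => ?; lra.
- have {Hx Hx'} Hx0 : x = 0 by lra.
  case: (Rlt_dec R0 y) => Hy /=; first by split => ?; lra.
  case: (Rlt_dec y R0) => Hy' /=; first by split => ?; lra.
  by case: Hz; split; lra.
Qed.

Lemma upper_half_trichotomy z :
  [\/ upper_half z, upper_half (copp z) | cRe z = 0 /\ cIm z = 0].
Proof.
case: z => x y; rewrite /upper_half /=.
case: (Rtotal_order y 0) => [Hy|[Hy|Hy]]; last by constructor 1; left.
  by constructor 2; left; lra.
case: (Rtotal_order x 0) => [Hx|[Hx|Hx]].
- by constructor 2; right; lra.
- by constructor 3.
- by constructor 1; right.
Qed.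

Lemma normsign_upper z : upper_half z -> normsign z = z.
Proof.
move=> Hz; have Hz0 : ~ (cRe z = 0 /\ cIm z = 0) by case: Hz => /=; lra.
have [H0 Hpi] := (Arg_range_upper_half Hz0).2 Hz.
rewrite /normsign; case: Rle_dec => [? /=|/(_ H0)[]].
by case: Rlt_dec => [? /=|/(_ Hpi)[]].
Qed.

Lemma normsign_lower z : upper_half (copp z) -> normsign z = copp z.
Proof.
case: z => x y Hz; have Hz0 : ~ (x = 0 /\ y = 0) by case: Hz => /=; lra.
have Hnot : ~ upper_half (mkC x y) by rewrite /upper_half; case: Hz => /=; lra.
have Hrange := @Arg_range_upper_half (mkC x y) Hz0.
rewrite /normsign; case: Rle_dec => //= H0; case: Rlt_dec => //= Hpi.
by case: Hnot; apply/Hrange.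
Qed.

Lemma copp_involutive z : copp (copp z) = z.
Proof. by case: z => x y; rewrite /copp /= !Ropp_involutive. Qed.

Lemma normsign_opp z : normsign (copp z) = normsign z.
Proof.
case: (upper_half_trichotomy z) => [Hz|Hz|].
- by rewrite normsign_lower ?copp_involutive ?normsign_upper.
- by rewrite normsign_upper // normsign_lower.
- by case: z => x y /= [-> ->]; rewrite /copp /= Ropp_0.
Qed.

Lemma det_mact a b c d v u :
  det (mact a b c d v) (mact a b c d u) =
  cmul (csub (cmul a d) (cmul b c)) (det v u).
Proof.
move: a b c d v u => [a1 a2] [b1 b2] [c1 c2] [d1 d2] [[v1 v2] [v3 v4]] [[u1 u2] [u3 u4]].
by rewrite /det /mact /cmul /csub /cadd /copp /=; f_equal; ring.
Qed.

Lemma cmul1z z : cmul cone z = z.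
Proof. by case: z => x y; rewrite /cmul /cone /=; f_equal; ring. Qed.

Lemma det_oppl v u : det (copp v.1, copp v.2) u = copp (det v u).
Proof.
move: v u => [[v1 v2] [v3 v4]] [[u1 u2] [u3 u4]].
by rewrite /det /cmul /csub /cadd /copp /=; f_equal; ring.
Qed.

Lemma det_oppr v u : det v (copp u.1, copp u.2) = copp (det v u).
Proof.
move: v u => [[v1 v2] [v3 v4]] [[u1 u2] [u3 u4]].
by rewrite /det /cmul /csub /cadd /copp /=; f_equal; ring.
Qed.

Lemma cc_Veq v v' u u' : Veq v v' -> Veq u u' -> cc v u = cc v' u'.
Proof.
by rewrite /cc => -[|] -> [|] ->; rewrite ?det_oppl ?det_oppr ?normsign_opp.
Qed.

Lemma cc_mact a b c d v u : csub (cmul a d) (cmul b c) = cone ->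
  cc (mact a b c d v) (mact a b c d u) = cc v u.
Proof. by move=> Hdet; rewrite /cc det_mact Hdet cmul1z. Qed.

Lemma cadd00 : cadd czero czero = czero.
Proof. by rewrite /cadd /czero /= Rplus_0_l. Qed.

Lemma caddN z : cadd z (copp z) = czero.
Proof. by case: z => x y; rewrite /cadd /copp /czero /= !Rplus_opp_r. Qed.

Local Close Scope R_scope.
Local Open Scope ring_scope.

Section AlternatingBiadditive.
Variables (B : zmodType) (f : cpx -> cpx -> B).
Hypothesis f_alt : alt_biadd f.

Lemma wedgeDl x y z : f (cadd x y) z = f x z + f y z.
Proof. by case: f_alt. Qed.
Lemma wedgeDr x y z : f x (cadd y z) = f x y + f x z.
Proof. by case: f_alt. Qed.
Lemma wedgexx x : f x x = 0.
Proof. by case: f_alt. Qed.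

Lemma wedge0l y : f czero y = 0.
Proof. by apply: (@addrI _ (f czero y)); rewrite -wedgeDl cadd00 addr0. Qed.
Lemma wedge0r x : f x czero = 0.
Proof. by apply: (@addrI _ (f x czero)); rewrite -wedgeDr cadd00 addr0. Qed.

Lemma wedgeNl x y : f (copp x) y = - f x y.
Proof. by apply: (@addrI _ (f x y)); rewrite -wedgeDl caddN wedge0l subrr. Qed.
Lemma wedgeNr x y : f x (copp y) = - f x y.
Proof. by apply: (@addrI _ (f x y)); rewrite -wedgeDr caddN wedge0r subrr. Qed.

Lemma wedgeBl x y z : f (csub x y) z = f x z - f y z.
Proof. by rewrite wedgeDl wedgeNl. Qed.
Lemma wedgeBr x y z : f x (csub y z) = f x y - f x z.
Proof. by rewrite wedgeDr wedgeNr. Qed.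

Lemma wedgeC x y : f y x = - f x y.
Proof.
apply: (@addrI _ (f x y)); rewrite subrr.
by have := wedgexx (cadd x y); rewrite !wedgeDl !wedgeDr !wedgexx add0r addr0.
Qed.

Lemma wedge_flattening c01 c02 c03 c12 c13 c23 :
  f (csub (cadd c03 c12) (cadd c02 c13)) (csub (cadd c02 c13) (cadd c01 c23)) =
  (f c12 c13 - f c12 c23 + f c13 c23) - (f c02 c03 - f c02 c23 + f c03 c23)
  + (f c01 c03 - f c01 c13 + f c03 c13) - (f c01 c02 - f c01 c12 + f c02 c12).
Proof.
rewrite wedgeBl !wedgeBr wedgexx !wedgeDl !wedgeDr.
rewrite (wedgeC c03 c02) (wedgeC c12 c02) (wedgeC c03 c01) (wedgeC c12 c01).
rewrite (wedgeC c02 c01) (wedgeC c13 c01) sub0r !opprD !opprK !addrA.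
by rewrite [LHS](ACl (4*8*12*1*10*6*5*11*2*9*7*3)%AC).
Qed.

End AlternatingBiadditive.

Lemma wedge_eval_cat (B : zmodType) (f : cpx -> cpx -> B) s t :
  wedge_eval f (s ++ t) = wedge_eval f s + wedge_eval f t.
Proof. by rewrite /wedge_eval big_cat. Qed.

Lemma wedge_eval_wscale (B : zmodType) (f : cpx -> cpx -> B) k s :
  wedge_eval f (wscale k s) = wedge_eval f s *~ k.
Proof.
rewrite /wedge_eval /wscale big_map; elim: s => [|p s IH].
  by rewrite !big_nil mul0rz.
by rewrite !big_cons IH mulrzDl mulrC mulrzA.
Qed.

Lemma nu_sigma_hat_mu_bd v0 v1 v2 v3 :
  weq (nu (sigma_hat v0 v1 v2 v3)) (mu_bd v0 v1 v2 v3).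
Proof.
move=> B f f_alt; rewrite /mu_bd !wedge_eval_cat !wedge_eval_wscale.
rewrite /wedge_eval !big_cons !big_nil /= wedge_flattening //.
by rewrite !addr0 !mulr1z !mulrN1z !addrA.
Qed.

Definition mu_value (B : zmodType) (f : cpx -> cpx -> B) (t : tuple3) : B :=
  let '(v0, v1, v2) := t in wedge_eval f (mu v0 v1 v2).

Lemma mu_value_Gequiv (B : zmodType) (f : cpx -> cpx -> B) t t' :
  Gequiv t t' -> mu_value f t = mu_value f t'.
Proof.
case: t t' => [[v0 v1] v2] [[w0 w1] w2] [a [b [c [d [Hdet [H0 H1 H2]]]]]] /=.
by rewrite /mu -(cc_Veq H0 H1) -(cc_Veq H0 H2) -(cc_Veq H1 H2) !cc_mact.
Qed.

Lemma wedge_eval_nu_sigma_chain (B : zmodType) (f : cpx -> cpx -> B) ch :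
  alt_biadd f ->
  wedge_eval f (nu_sigma_chain ch) = \sum_(q <- bd ch) mu_value f q.2 *~ q.1.
Proof.
move=> f_alt; elim: ch => [|[k [[[v0 v1] v2] v3]] ch IH].
  by rewrite /wedge_eval !big_nil.
have -> : nu_sigma_chain ((k, (v0, v1, v2, v3)) :: ch) =
  wscale k (nu (sigma_hat v0 v1 v2 v3)) ++ nu_sigma_chain ch by [].
have -> : bd ((k, (v0, v1, v2, v3)) :: ch) =
  [seq (k * q.1, q.2) | q <- faces (v0, v1, v2, v3)] ++ bd ch by [].
rewrite wedge_eval_cat IH big_cat; congr (_ + _).
rewrite wedge_eval_wscale (nu_sigma_hat_mu_bd _ _ _ _ f_alt) /mu_bd !wedge_eval_cat.
rewrite !wedge_eval_wscale big_map !big_cons big_nil /=.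
by rewrite addr0 !mulrzDl !(mulrC k) !mulrzA.
Qed.

Theorem mainTheorem1 :
  (forall v0 v1 v2 v3 : CV, gen4 v0 v1 v2 v3 ->
     weq (nu (sigma_hat v0 v1 v2 v3)) (mu_bd v0 v1 v2 v3)) /\
  (forall ch : chain3, (forall p, List.In p ch -> gen4t p.2) ->
     zero_coinv (bd ch) ->
     weq (nu_sigma_chain ch) [::]).
Proof.
split=> [v0 v1 v2 v3 _ | ch _ bd_zero B f f_alt]; first exact: nu_sigma_hat_mu_bd.
rewrite wedge_eval_nu_sigma_chain // [RHS]big_nil.
by apply: bd_zero => t t'; apply: mu_value_Gequiv.
Qed.
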